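(* Let $\langle\eta\rangle:=B_1/(\xi_L,\xi)$, where $B_1=\langle\eta,\xi,\xi_L\rangle$. Then $HH^n_{(1-n)}(B,\langle\eta\rangle)\cong k$ for $n\in\{1,2\}$ and $0$ otherwise; $HH^n_{(2-n)}(B,\langle\eta\rangle)\cong k$ for $n\in\{5,6\}$ and $0$ otherwise; $HH^n_{(3-n)}(B,\langle\eta\rangle)\cong k$ for $n\in\{9,10\}$ and $0$ otherwise; $HH^n_{(4-n)}(B,\langle\eta\rangle)\cong k$ for $n\in\{13,14\}$ and $0$ otherwise.
   Context: Let $k$ be a field with $\operatorname{char}k\neq2,3$. Let $B$ be the graded $k$-algebra with $k$-basis $\mathrm{id}_L,\mathrm{id}_{\mathcal O},\theta$ (degree $0$) and $\eta,\xi,\xi_L$ (degree $1$), whose only nonzero products of basis elements are $\mathrm{id}_L\mathrm{id}_L=\mathrm{id}_L$, $\mathrm{id}_{\mathcal O}\mathrm{id}_{\mathcal O}=\mathrm{id}_{\mathcal O}$, $\mathrm{id}_L\xi_L=\xi_L\mathrm{id}_L=\xi_L$, $\mathrm{id}_{\mathcal O}\xi=\xi\mathrm{id}_{\mathcal O}=\xi$, $\mathrm{id}_L\eta=\eta\,\mathrm{id}_{\mathcal O}=\eta$, $\mathrm{id}_{\mathcal O}\theta=\theta\,\mathrm{id}_L=\theta$, $\theta\eta=\xi$, $\eta\theta=\xi_L$. Let $R=k\langle\mathrm{id}_L,\mathrm{id}_{\mathcal O}\rangle$, $B_+=\langle\theta,\eta,\xi,\xi_L\rangle$, $B=R\oplus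 B_+$; tensor products are over $R$. $B_1=\langle\eta,\xi,\xi_L\rangle$ and $(\xi_L,\xi)=\langle\xi_L,\xi\rangle$ are sub-bimodules of $B$. For a graded $B$-bimodule $M$, the reduced Hochschild complex is $C^n(B,M)=\operatorname{Hom}_{R\text{-}R}(B_+^{\otimes_R n},M)$ with $\delta(\phi)(a_0,\dots,a_n)=a_0\phi(a_1,\dots,a_n)+\sum_{i=1}^n(-1)^i\phi(a_0,\dots,a_{i-1}a_i,\dots,a_n)+(-1)^{n+1}\phi(a_0,\dots,a_{n-1})a_n$; $HH^n_{(m)}(B,M)$ is the cohomology of the subcomplex of cochains homogeneous of internal degree $m$ ($\deg\phi(x)=\deg x+m$). *)

From HB Require Import structures.
From mathcomp Require Import all_boot all_order all_algebra.
Set Implicit Arguments. Unset Strict Implicit. Unset Printing Implicit Defensive.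
Import Order.TTheory GRing.Theory Num.Theory.
Local Open Scope ring_scope.

(* k-basis of B: id_L, id_O, theta (degree 0); eta, xi, xi_L (degree 1). *)
Inductive bas := idL | idO | th | et | xi | xiL.

Definition bas2o (b : bas) : nat :=
  match b with idL => 0 | idO => 1 | th => 2 | et => 3 | xi => 4 | xiL => 5 end%N.
Definition o2bas (n : nat) : option bas :=
  match n with 0 => Some idL | 1 => Some idO | 2 => Some th | 3 => Some et
             | 4 => Some xi | 5 => Some xiL | _ => None end%N.
Lemma bas2oK : pcancel bas2o o2bas. Proof. by case. Qed.
HB.instance Definition _ := Countable.copy bas (pcan_type bas2oK).
Definition bas_enum := [:: idL; idO; th; et; xi; xiL].
Lemma bas_enumP : Finite.axiom bas_enum. Proof. by case. Qed.
HB.instance Definition _ := isFinite.Build bas bas_enumP.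

Definition degb (b : bas) : nat :=
  match b with idL | idO | th => 0 | et | xi | xiL => 1 end%N.

(* product of basis elements: [Some c] if the product is the basis element c,
   [None] if it is 0 (these are the only nonzero products listed). *)
Definition mulb (a b : bas) : option bas :=
  match a, b with
  | idL, idL => Some idL
  | idO, idO => Some idO
  | idL, xiL => Some xiL | xiL, idL => Some xiL
  | idO, xi => Some xi   | xi, idO => Some xi
  | idL, et => Some et   | et, idO => Some et
  | idO, th => Some th   | th, idL => Some th
  | th, et => Some xi
  | et, th => Some xiL
  | _, _ => None
  end.

(* R = k<id_L, id_O>: vertices / idempotents *)
Inductive vx := VL | VO.
Definition vx2b (v : vx) : bool := if v is VL then true else false.
Definition b2vx (b : bool) : vx := if b then VL else VO.
Lemma vx2bK : cancel vx2b b2vx. Proof. by case. Qed.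
HB.instance Definition _ := Finite.copy vx (can_type vx2bK).
Definition idem (v : vx) : bas := if v is VL then idL else idO.

Definition Bplus : pred bas := fun b => b \in [:: th; et; xi; xiL].
Definition bpT := {b : bas | Bplus b}.

Definition lft (a : bpT) : vx :=
  if mulb idL (val a) == Some (val a) then VL else VO.
Definition rgt (a : bpT) : vx :=
  if mulb (val a) idL == Some (val a) then VL else VO.

(* B_1 = <eta, xi, xi_L>; since (xi_L, xi) = <xi_L, xi> the quotient is the
   one-dimensional space k.eta; an element of it is given by its eta-coordinate
   (an element of k).  The bimodule action is the multiplication of B followed
   by taking the eta-coordinate (i.e. reducing modulo <xi_L, xi>). *)
Section Module.
Variable k : fieldType.

Definition etacoef (o : option bas) : k := if o == Some et then 1 else 0.
Definition actL (b : bas) (x : k) : k := x * etacoef (mulb b et).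
Definition actR (x : k) (b : bas) : k := x * etacoef (mulb et b).
Definition degM : nat := degb et.

(* A k-basis of B_+^{(x)_R n} is given by the elements e.a_1 (x) ... (x) a_n
   with e an idempotent of R, a_i basis elements of B_+, e a_1 = a_1 and
   a_i a_{i+1} composable (for n = 0 these are the idempotents e of R).
   We index them by pairs (e, (a_1,...,a_n)).  An R-R-bimodule map is
   determined by its values on this basis; a cochain is the function of
   those values (values at non-composable indices are forced to be 0). *)
Definition pathT n := (vx * n.-tuple bpT)%type.
Definition cochain n := {ffun pathT n -> k^o}.

Definition composable n (p : pathT n) : bool :=
  let: (v, t) := p in
  if val t is a :: s then (lft a == v) && path (fun a b => rgt a == lft b) a s
  else true.
Definition endv n (p : pathT n) : vx := last p.1 [seq rgt a | a <- val p.2].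
Definition degp n (p : pathT n) : nat := \sum_(a <- val p.2) degb (val a).

(* the index p can carry a nonzero value of an R-R-bimodule map homogeneous of
   internal degree m: p is a basis element, e_start M e_end <> 0 and
   M is nonzero in degree deg p + m *)
Definition admissible (m : int) n (p : pathT n) : bool :=
  [&& composable p,
      actR (actL (idem p.1) 1) (idem (endv p)) == 1 &
      (degp p)%:Z + m == (degM)%:Z].

Definition projC (m : int) n (phi : cochain n) : cochain n :=
  [ffun p => if admissible m p then phi p else 0].
Definition Cspace (m : int) n : {vspace cochain n} := limg (linfun (@projC m n)).

(* value of phi on e.(a_1 (x) ... (x) a_n), given as a sequence (0 if the
   length is wrong) *)
Definition evs n (phi : cochain n) (v : vx) (s : seq bpT) : k :=
  oapp (fun t : n.-tuple bpT => phi (v, t)) 0 (insub s).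

Definition mulbp (a b : bpT) : option bpT :=
  obind (fun c => insub c) (mulb (val a) (val b)).

(* the Hochschild differential, evaluated on e.(a_0 (x) ... (x) a_n) :
   a_0 phi(a_1..a_n) + sum_{i=1}^n (-1)^i phi(.., a_{i-1}a_i, ..)
   + (-1)^{n+1} phi(a_0..a_{n-1}) a_n,
   using phi(x) = sum_w phi(w.x) for the first term. *)
Definition rawd n (phi : cochain n) : cochain n.+1 :=
  [ffun p => let: (v, t) := p in
     let a0 := thead t in let s := val t in
     \sum_(w : vx) actL (val a0) (evs phi w (behead s))
     + \sum_(i < n) (-1) ^+ i.+1 *
          (if mulbp (nth a0 s i) (nth a0 s i.+1) is Some c
           then evs phi v (take i s ++ c :: drop i.+2 s) else 0)
     + (-1) ^+ n.+1 * actR (evs phi v (take n s)) (val (last a0 s))].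

Definition hdiff (m : int) n : 'Hom(cochain n, cochain n.+1) :=
  linfun (fun phi => projC m (rawd phi)).

Definition Zspace (m : int) n : {vspace cochain n} :=
  (Cspace m n :&: lker (hdiff m n))%VS.
Definition Bspace (m : int) n : {vspace cochain n} :=
  if n is n'.+1 then (hdiff m n' @: Cspace m n')%VS else 0%VS.

Definition HHdim (m : int) (n : nat) : nat := (\dim (Zspace m n) - \dim (Bspace m n))%N.

End Module.

(* Because B_+ acts by zero on <eta> = k.eta, the outer terms of the
   Hochschild differential vanish and only the bar part remains: the
   alternating sum of the merges a_i a_{i+1} of adjacent letters of a word in
   the basis {theta, eta, xi, xi_L} of B_+.  A cochain of internal degree m
   lives on the composable words from L to O of weight 1 - m.  We compute the
   cohomology by an algebraic Morse matching on words: reading a word by pairs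
   from the left, a word whose first irregular position holds xi or xi_L is
   matched with the word in which that letter is split into its two
   generator factors.  The differential is triangular on the split words, so
   its rank is at least their number; the unmatched ("critical") words are
   eta xi theta xi_L eta ..., one per length, and an Euler-characteristic count
   shows that dim HH^n_{(m)} is 1 if the critical word of length n is
   admissible in degree m and 0 otherwise. *)

From HB Require Import structures.
From mathcomp Require Import all_boot all_order all_algebra.
From mathcomp Require Import zify ring.
Import GRing.Theory.

Set Implicit Arguments. Unset Strict Implicit. Unset Printing Implicit Defensive.

Definition Th : bpT := exist _ th isT.
Definition Et : bpT := exist _ et isT.
Definition Xi : bpT := exist _ xi isT.
Definition XiL : bpT := exist _ xiL isT.

Lemma bpT_cases (a : bpT) : [\/ a = Th, a = Et, a = Xi | a = XiL].
Proof.
case: a => [[] pa] //;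
  [constructor 1 | constructor 2 | constructor 3 | constructor 4]; exact: val_inj.
Qed.

Ltac letter_cases a := have [->|->|->|->] := bpT_cases a.

(* xi = theta eta and xi_L = eta theta are the decomposable letters; their
   factors are the two generators theta and eta *)
Definition decomposable (a : bpT) : bool := (val a == xi) || (val a == xiL).
Definition left_factor (a : bpT) : bpT := if val a == xi then Th else Et.
Definition right_factor (a : bpT) : bpT := if val a == xi then Et else Th.

Definition gen_from (v : vx) : bpT := if v is VL then Et else Th.
Definition prod_from (v : vx) : bpT := if v is VL then XiL else Xi.
Definition opposite (v : vx) : vx := if v is VL then VO else VL.

Lemma mulbp_decomposable_l a b : decomposable a -> mulbp a b = None.
Proof. by letter_cases a; letter_cases b; rewrite /mulbp /= ?insubT. Qed.

Lemma mulbp_decomposable_r a b : decomposable b -> mulbp a b = None.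
Proof. by letter_cases a; letter_cases b; rewrite /mulbp /= ?insubT. Qed.

Lemma mulbp_some a b c : mulbp a b = Some c ->
  [/\ decomposable c, ~~ decomposable a, ~~ decomposable b, lft c = lft a &
      [/\ rgt c = rgt b, rgt a = lft b & degb (val c) = (degb (val a) + degb (val b))%N]].
Proof. by letter_cases a; letter_cases b; rewrite /mulbp /= ?insubT // => -[<-]. Qed.

Lemma factorsK a : decomposable a -> mulbp (left_factor a) (right_factor a) = Some a.
Proof. by letter_cases a; rewrite /mulbp /= ?insubT. Qed.

Lemma left_factor_gen a : decomposable (left_factor a) = false.
Proof. by letter_cases a. Qed.

Lemma right_factor_gen a : decomposable (right_factor a) = false.
Proof. by letter_cases a. Qed.

Lemma mulbp_generators x y : ~~ decomposable x -> ~~ decomposable y -> rgt x = lft y ->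
  exists c, [/\ mulbp x y = Some c, left_factor c = x & right_factor c = y].
Proof. by letter_cases x; letter_cases y; rewrite /mulbp /= ?insubT // => _ _ _; eexists. Qed.

(* [merge_at s i] replaces the letters i, i+1 of s by their product, or is None
   if that product is 0 (or i+1 is out of range) *)
Fixpoint merge_at (s : seq bpT) (i : nat) {struct s} : option (seq bpT) :=
  match s with
  | a :: s' => match i with
     | 0 => if s' is b :: r then omap (fun c => c :: r) (mulbp a b) else None
     | i'.+1 => omap (cons a) (merge_at s' i') end
  | [::] => None end.

Lemma mergeE s i d : (i.+1 < size s)%N -> merge_at s i =
  if mulbp (nth d s i) (nth d s i.+1) is Some c
  then Some (take i s ++ c :: drop i.+2 s) else None.
Proof.
elim: s i => [|a s IH] [|i] //=.
  by case: s IH => [|b r] //= _ _; rewrite drop0; case: mulbp.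
by move=> lt; rewrite IH //; case: mulbp.
Qed.

Lemma merge_size s i t : merge_at s i = Some t -> size t = (size s).-1 /\ (i.+1 < size s)%N.
Proof.
elim: s i t => [|a s IH] [|i] t //=.
  by case: s IH => [|b r] IH //=; case: mulbp => //= c [<-].
case E: (merge_at s i) => [t'|] //= [<-]; have [st lt] := IH _ _ E.
by rewrite /= st; split => //; case: (size s) lt.
Qed.

Lemma merge_head s t : merge_at s 0 = Some t -> exists c r, t = c :: r /\ decomposable c.
Proof.
case: s => [|a [|b r]] //=; case E: mulbp => [c|] //= [<-].
by have [? ? ? ? _] := mulbp_some E; exists c, r.
Qed.

Lemma merge_again s i t : merge_at s i = Some t ->
  merge_at t i = None /\ (0 < i -> merge_at t i.-1 = None)%N.
Proof.
elim: s i t => [|a s IH] [|i] t //=.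
  clear IH; case: s => [|b r] //=; case E: mulbp => [c|] //= [<-]; split => //=.
  have [? ? ? ? _] := mulbp_some E.
  by case: r => //= b' r'; rewrite mulbp_decomposable_l.
case E: (merge_at s i) => [t'|] //= [<-]; have [h1 h2] := IH _ _ E.
split; first by rewrite /= h1.
move=> _; case: i E h1 h2 => [|i] E h1 h2 /=.
  by have [c [r [-> hc]]] := merge_head E; rewrite mulbp_decomposable_r.
by rewrite h2.
Qed.

Lemma merge_comm s i j : (i < j)%N ->
  obind (merge_at^~ j) (merge_at s i) = obind (merge_at^~ i) (merge_at s j.+1).
Proof.
elim: s i j => [|a s IH] [|i] [|j] //= lt.
- clear IH; case: s => [|b r] //=; case Eab: mulbp => [c|] //=;
  by case: (merge_at r j) => [r'|] //=; rewrite Eab.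
- have := IH i j lt; case: (merge_at s i) => [t|] /=; case: (merge_at s j.+1) => [t'|] //=;
  by [move=> -> | move=> <-].
Qed.

Section DoubleSum.
Variable R : pzRingType.
Local Open Scope ring_scope.

(* the cancellation pattern behind D^2 = 0: a double sum over 0 <= i <= M,
   0 <= j < M whose terms with i < j cancel the terms with j + 1 < i, and
   whose terms with j = i or j + 1 = i vanish, is zero *)
Lemma antisymmetric_double_sum M (G : nat -> nat -> R) :
  (forall i j, (i < j)%N -> (j < M)%N -> G i j = - G j.+1 i) ->
  (forall i j, (i < M.+1)%N -> (j < M)%N -> (j == i) || (j.+1 == i) -> G i j = 0) ->
  \sum_(i < M.+1) \sum_(j < M) G i j = 0.
Proof.
move=> Gswap Gdiag.
have split_ij (i : 'I_M.+1) (j : 'I_M) : G i j =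
    (if (j.+1 < i)%N then G i j else 0) + (if (i < j)%N then G i j else 0).
  case: ifP => h1; case: ifP => h2; rewrite ?addr0 ?add0r //; first by lia.
  rewrite Gdiag //; apply/orP; move/negbT: h1; move/negbT: h2; rewrite -!leqNgt.
  by case: (ltngtP j i) => //; try lia; move=> ->; rewrite eqxx.
under eq_bigr => i _ do under eq_bigr => j _ do rewrite split_ij.
under eq_bigr => i _ do rewrite big_split /=.
rewrite big_split /= [X in X + _]big_ord_recl [X in X + _ + _]big1 ?add0r //.
rewrite [X in _ + X]big_ord_recr /= [X in _ + (_ + X)]big1 ?addr0; last first.
  by move=> j _; rewrite ltnNge (ltnW (ltn_ord j)).
have -> : \sum_(i < M) \sum_(j < M) (if (i < j)%N then G i j else 0)
    = - \sum_(j < M) \sum_(i < M) (if (i < j)%N then G j.+1 i else 0).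
  rewrite exchange_big /= -sumrN; apply: eq_bigr => j _; rewrite -sumrN.
  by apply: eq_bigr => i _ /=; case: ifP => h; rewrite ?oppr0 // Gswap // opprK.
apply/eqP; rewrite subr_eq0; apply/eqP.
by apply: eq_bigr => i _; apply: eq_bigr => j _; rewrite /bump /= add1n ltnS.
Qed.

End DoubleSum.

Section Bar.
Variable R : comPzRingType.
Local Open Scope ring_scope.

Definition bar (F : seq bpT -> R) (s : seq bpT) : R :=
  \sum_(i < (size s).-1) (-1) ^+ i.+1 * oapp F 0 (merge_at s i).

Lemma bar_ext (F G : seq bpT -> R) s :
  (forall i t, merge_at s i = Some t -> F t = G t) -> bar F s = bar G s.
Proof.
move=> FG; apply: eq_bigr => i _.
by case E: (merge_at s i) => [t|] //=; rewrite (FG _ _ E).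
Qed.

Lemma bar_linear a (F G : seq bpT -> R) s :
  bar (fun t => a * F t + G t) s = a * bar F s + bar G s.
Proof.
rewrite /bar mulr_sumr -big_split /=; apply: eq_bigr => i _.
by case: (merge_at s i) => [t|] /=; rewrite ?mulr0 ?addr0 // mulrDr mulrCA.
Qed.

(* D^2 = 0: the double merges at positions i < j cancel in pairs *)
Lemma bar_bar F s : bar (bar F) s = 0.
Proof.
rewrite /bar; case E: (size s) => [|[|M]] /=; try by rewrite big_ord0.
pose G i j : R :=
  (-1) ^+ i.+1 * (-1) ^+ j.+1 * oapp F 0 (obind (merge_at^~ j) (merge_at s i)).
transitivity (\sum_(i < M.+1) \sum_(j < M) G i j).
  apply: eq_bigr => i _; case Em: (merge_at s i) => [t|] /=.
    have [st _] := merge_size Em; rewrite st E /= mulr_sumr; apply: eq_bigr => j _.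
    by rewrite /G Em /= mulrA.
  by rewrite mulr0 big1 // => j _; rewrite /G Em /= mulr0.
apply: antisymmetric_double_sum.
  move=> i j lt _; rewrite /G (merge_comm s lt) (exprS _ j.+1) mulN1r !mulNr opprK.
  by rewrite [(-1) ^+ i.+1 * _]mulrC.
move=> i j _ _ /orP[/eqP -> | /eqP <-]; rewrite /G; case Em: (merge_at s _) => [t|] //=;
  rewrite ?mulr0 //; have [again_i again_pred] := merge_again Em.
  by rewrite again_i mulr0.
by rewrite (again_pred isT) mulr0.
Qed.

End Bar.

Fixpoint composable_from (v : vx) (s : seq bpT) : bool :=
  if s is a :: s' then (lft a == v) && composable_from (rgt a) s' else true.
Fixpoint end_vertex (v : vx) (s : seq bpT) : vx :=
  if s is a :: s' then end_vertex (rgt a) s' else v.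
Definition weight (s : seq bpT) : nat := \sum_(a <- s) degb (val a).

Lemma merge_at_preserves s i t v : merge_at s i = Some t ->
  [/\ composable_from v t = composable_from v s, end_vertex v t = end_vertex v s
    & weight t = weight s].
Proof.
elim: s i t v => [|a s IH] [|i] t v //=.
  case: s IH => [|b r] IH //=; case E: mulbp => [c|] //= [<-].
  have [_ _ _ lft_c [rgt_c rgt_a deg_c]] := mulbp_some E.
  by rewrite /= lft_c rgt_c rgt_a eqxx /weight !big_cons deg_c addnA.
case E: (merge_at s i) => [t'|] //= [<-]; have [h1 h2 h3] := IH _ _ (rgt a) E.
by rewrite /= h1 h2 /weight !big_cons -/(weight t') -/(weight s) h3.
Qed.

(* a composable word from v has at most 2 weight + [v = O] letters, since
   consecutive generators alternate between theta (degree 0) and eta *)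
Lemma size_le_weight s v : composable_from v s -> (size s <= 2 * weight s + (v == VO))%N.
Proof.
elim: s v => [|a s IH] v //=; case/andP => /eqP <- /IH.
by rewrite /weight big_cons -/(weight s); letter_cases a => /=; lia.
Qed.

Lemma seq_ind2 (T : Type) (P : seq T -> Prop) : P [::] -> (forall x, P [:: x]) ->
  (forall x y r, P r -> P (x :: y :: r)) -> forall s, P s.
Proof.
move=> P0 P1 P2 s; suff: P s /\ (forall x, P (x :: s)) by case.
by elim: s => [|y r [IH1 IH2]]; split => // x; apply: P2.
Qed.

(** The Morse matching on words.
   Read a word by pairs of letters from the left; it starts with a run of
   [pair_prefix s] pairs (generator, decomposable letter).  After this run the
   word is [splittable] if the next letter is decomposable, [mergeable] if the
   next two letters are generators, and [critical] otherwise.  Splitting the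
   decomposable letter ([split_word]) and merging the two generators
   ([merge_word]) are mutually inverse bijections between splittable and
   mergeable words. *)

Fixpoint pair_prefix (s : seq bpT) : nat :=
  if s is x :: (y :: r) then
    (if ~~ decomposable x && decomposable y then (pair_prefix r).+1 else 0)
  else 0.
Fixpoint splittable (s : seq bpT) : bool :=
  match s with
  | x :: r => if decomposable x then true
              else (if r is y :: r' then decomposable y && splittable r' else false)
  | [::] => false end.
Fixpoint mergeable (s : seq bpT) : bool :=
  match s with
  | x :: y :: r => if decomposable x then false
                   else if decomposable y then mergeable r else true
  | _ => false end.
Definition critical (s : seq bpT) : bool := ~~ splittable s && ~~ mergeable s.

Fixpoint split_word (s : seq bpT) : seq bpT :=
  match s with
  | x :: r => if decomposable x then left_factor x :: right_factor x :: r
              else (if r is y :: r' then x :: y :: split_word r' else s)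
  | [::] => [::] end.
Fixpoint merge_word (s : seq bpT) : seq bpT :=
  match s with
  | x :: y :: r => if decomposable x then s
                   else if decomposable y then x :: y :: merge_word r
                   else odflt x (mulbp x y) :: r
  | _ => s end.

Lemma splittable_not_mergeable s : splittable s -> ~~ mergeable s.
Proof.
move: s; apply: seq_ind2 => //= x y r IH; case: ifP => //= _.
by case/andP => -> /IH.
Qed.

Lemma split_word_size s : splittable s -> size (split_word s) = (size s).+1.
Proof.
move: s; apply: seq_ind2 => //= [x|x y r IH]; first by case: ifP.
by case: ifP => //= _ /andP[_ /IH ->].
Qed.

Lemma split_word_mergeable s :
  splittable s -> mergeable (split_word s) /\ pair_prefix (split_word s) = pair_prefix s.
Proof.
move: s; apply: seq_ind2 => //= [x|x y r IH].
  by case: ifP => //= _; rewrite left_factor_gen right_factor_gen.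
case: ifP => dx /=; first by rewrite left_factor_gen right_factor_gen.
by case/andP => dy /IH [h1 h2]; rewrite dx dy h1 h2.
Qed.

Lemma merge_split_word s :
  splittable s -> merge_at (split_word s) (pair_prefix s).*2 = Some s.
Proof.
move: s; apply: seq_ind2 => //= [x|x y r IH]; first by case: ifP => //= dx; rewrite factorsK.
case: ifP => dx /=; first by rewrite factorsK.
by case/andP => dy /IH h; rewrite dy /= h.
Qed.

(* every other merge of the split word is either not splittable or has a
   longer prefix: this is what makes the differential triangular *)
Lemma merge_split_word_other s j t : splittable s -> j != (pair_prefix s).*2 ->
  merge_at (split_word s) j = Some t -> ~~ splittable t || (pair_prefix s < pair_prefix t)%N.
Proof.
move: s j t; apply: seq_ind2 => //= [x|x y r IH] j t.
  by case: ifP => //= dx _; case: j => [|[|j]].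
case: ifP => dx /=.
  move=> _; case: j => [|[|j]] //= _.
    case E: mulbp => [c|] //= [<-] /=; have [dc _ _ _ _] := mulbp_some E.
    by rewrite left_factor_gen dc orbT.
  rewrite -[X in omap (cons (right_factor x)) X]/(merge_at (y :: r) j).
  case: (merge_at (y :: r) j) => [t'|] // [<-] /=.
  by rewrite left_factor_gen right_factor_gen.
case/andP => dy split_r; case: j => [|[|j]] //=.
- by rewrite mulbp_decomposable_r.
- by case: (split_word r) => //= ? ?; rewrite mulbp_decomposable_l.
rewrite dy /= doubleS !eqSS => hj; case E: (merge_at (split_word r) j) => [t'|] //= [<-] /=.
by rewrite dx dy /= ltnS; apply: IH hj E.
Qed.

Lemma split_wordK s : splittable s -> merge_word (split_word s) = s.
Proof.
move: s; apply: seq_ind2 => //= [x|x y r IH].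
  by case: ifP => //= dx; rewrite ?left_factor_gen ?right_factor_gen factorsK.
case: ifP => dx /=; first by rewrite ?left_factor_gen ?right_factor_gen factorsK.
by case/andP => dy /IH h; rewrite dx dy h.
Qed.

Lemma merge_wordK s v : composable_from v s -> mergeable s ->
  splittable (merge_word s) /\ split_word (merge_word s) = s.
Proof.
move: s v; apply: seq_ind2 => //= x y r IH v.
case/and3P => /eqP lft_x /eqP rgt_x comp_r; case: ifP => dx //; case: ifP => dy /=.
  by move/(IH _ comp_r) => [h1 h2]; rewrite dx dy h1 h2.
move=> _; have [c [E h1 h2]] := mulbp_generators (negbT dx) (negbT dy) (esym rgt_x).
by have [dc _] := mulbp_some E; rewrite E /= dc h1 h2.
Qed.

Fixpoint critical_word (v : vx) (n : nat) : seq bpT :=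
  match n with 0 => [::] | 1 => [:: gen_from v]
  | n'.+2 => gen_from v :: prod_from (opposite v) :: critical_word (opposite v) n' end.

Lemma critical_word_spec n v :
  [/\ size (critical_word v n) = n, composable_from v (critical_word v n)
    & critical (critical_word v n)].
Proof.
elim/ltn_ind: n v => n IH v; case: n IH => [|[|n]] IH; first by [].
  by case: v.
have [h1 h2 h3] := IH n (leqW (leqnn n.+1)) (opposite v).
split; first by rewrite /= h1.
  by move: h2; case: (v) => /= ->.
by move: h3; case: (v).
Qed.

Lemma critical_word_unique s v :
  composable_from v s -> critical s -> s = critical_word v (size s).
Proof.
move: s v; apply: seq_ind2 => [//|x|x y r IH] v /=.
  move=> /andP[/eqP <- _]; rewrite /critical /=.
  by case: ifP => //= dx _; move: dx; letter_cases x.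
rewrite /critical /=; case/and3P => /eqP lft_x /eqP rgt_x comp_r; case: ifP => // dx.
case: ifP => //= dy /andP[nsplit nmerge].
have ex : x = gen_from v by move: dx lft_x; letter_cases x => //= _ <-.
have ey : y = prod_from (opposite v).
  by subst x; move: dy rgt_x; letter_cases y => //= _; case: (v).
have ev : rgt y = opposite v by rewrite ey; case: (v).
rewrite (IH _ comp_r); last by rewrite /critical nsplit nmerge.
by rewrite ev ex ey; have [-> _ _] := critical_word_spec (size r) (opposite v).
Qed.

Section Cochains.
Variable k : fieldType.
Local Open Scope ring_scope.

Lemma actL_plus (a : bpT) (x : k) : actL (val a) x = 0.
Proof. by letter_cases a; rewrite /actL /etacoef /= mulr0. Qed.

Lemma actR_plus (a : bpT) (x : k) : actR x (val a) = 0.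
Proof. by letter_cases a; rewrite /actR /etacoef /= mulr0. Qed.

Lemma evs_tuple n (phi : cochain k n) v (t : n.-tuple bpT) : evs phi v (val t) = phi (v, t).
Proof. by rewrite /evs valK. Qed.

Lemma evs_bad_size n (phi : cochain k n) v s : size s != n -> evs phi v s = 0.
Proof. by move=> ns; rewrite /evs insubF // (negbTE ns). Qed.

Lemma evs_linear n a (phi psi : cochain k n) v s :
  evs (a *: phi + psi) v s = a * evs phi v s + evs psi v s.
Proof. by rewrite /evs; case: insubP => [t _ _|_] /=; rewrite ?ffunE ?mulr0 ?addr0. Qed.

Lemma rawd_bar n (phi : cochain k n) v (t : n.+1.-tuple bpT) :
  rawd phi (v, t) = bar (evs phi v) (val t).
Proof.
rewrite /rawd ffunE big1 ?add0r; last by move=> w _; rewrite actL_plus.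
rewrite actR_plus mulr0 addr0 /bar size_tuple /=; apply: eq_bigr => i _.
by rewrite (mergeE (thead t)) ?size_tuple ?ltnS //; case: mulbp.
Qed.

Lemma evs_rawd n (phi : cochain k n) v s : evs (rawd phi) v s = bar (evs phi v) s.
Proof.
case: (eqVneq (size s) n.+1) => sz.
  by have := rawd_bar phi v (Tuple (introT eqP sz)); rewrite -evs_tuple.
rewrite evs_bad_size // /bar big1 // => i _.
case E: (merge_at s i) => [t|] /=; last by rewrite mulr0.
have [st lt] := merge_size E; rewrite evs_bad_size ?mulr0 // st.
by move: sz lt; lia.
Qed.

Lemma projC_is_linear m n : linear (@projC k m n).
Proof.
move=> a phi psi; apply/ffunP=> p; rewrite !ffunE.
by case: ifP => _; rewrite ?scaler0 ?addr0.
Qed.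
HB.instance Definition _ (m : int) (n : nat) :=
  GRing.isLinear.Build k (cochain k n) (cochain k n) _ (@projC k m n) (@projC_is_linear m n).

Lemma rawd_is_linear n : linear (@rawd k n).
Proof.
move=> a phi psi; apply/ffunP=> -[v t]; rewrite rawd_bar.
have -> : (a *: rawd phi + rawd psi) (v, t) = a * rawd phi (v, t) + rawd psi (v, t).
  by rewrite !ffunE.
rewrite !rawd_bar -bar_linear; apply: bar_ext => i t' _; exact: evs_linear.
Qed.
HB.instance Definition _ (n : nat) :=
  GRing.isLinear.Build k (cochain k n) (cochain k n.+1) _ (@rawd k n) (@rawd_is_linear n).

Definition hdiff_fun m n (phi : cochain k n) : cochain k n.+1 := projC m (rawd phi).
HB.instance Definition _ (m : int) (n : nat) :=
  GRing.Linear.copy (@hdiff_fun m n) (@projC k m n.+1 \o @rawd k n).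

Lemma hdiffE m n (phi : cochain k n) : hdiff k m n phi = projC m (rawd phi).
Proof.
by rewrite /hdiff; change (linfun (@hdiff_fun m n) phi = hdiff_fun m phi); rewrite lfunE.
Qed.

End Cochains.

Section CoordinateSpaces.
Variables (k : fieldType) (n : nat).
Local Open Scope ring_scope.

Definition restrict (P : pred (pathT n)) (phi : cochain k n) : cochain k n :=
  [ffun p => if P p then phi p else 0].

Lemma restrict_is_linear P : linear (restrict P).
Proof.
move=> a phi psi; apply/ffunP=> p; rewrite !ffunE.
by case: ifP => _; rewrite ?scaler0 ?addr0.
Qed.
HB.instance Definition _ P :=
  GRing.isLinear.Build k (cochain k n) (cochain k n) _ (restrict P) (restrict_is_linear P).

Definition delta (p : pathT n) : cochain k n := [ffun q => (q == p)%:R].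
Definition coord_space (P : pred (pathT n)) : {vspace cochain k n} :=
  <<[seq delta p | p <- enum P]>>%VS.

Lemma restrict_image_vanish P phi : phi \in limg (linfun (restrict P)) ->
  forall q, ~~ P q -> phi q = 0.
Proof.
by case/memv_imgP => psi _ -> q Pq; rewrite lfunE /= ffunE (negbTE Pq).
Qed.

Lemma restrict_delta (P : pred (pathT n)) p : P p -> restrict P (delta p) = delta p.
Proof.
move=> Pp; apply/ffunP => q; rewrite !ffunE.
by case: eqP => [->|]; [rewrite Pp | case: ifP].
Qed.

Lemma span_delta_vanish (l : seq (pathT n)) phi : phi \in <<map delta l>>%VS ->
  forall q, q \notin l -> phi q = 0.
Proof.
move=> phi_l q ql; apply: (restrict_image_vanish (P := mem l)) => //.
move: phi phi_l; apply/subvP/span_subvP => x /mapP [p pl ->].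
have -> : delta p = linfun (restrict (mem l)) (delta p).
  by rewrite lfunE /= (restrict_delta (P := mem l) pl).
exact: memv_img (memvf _).
Qed.

Lemma free_delta (l : seq (pathT n)) : uniq l -> free (map delta l).
Proof.
elim: l => [|x l IH] /=; first by rewrite nil_free.
case/andP => xl ul; rewrite free_cons IH // andbT.
apply/negP => /span_delta_vanish /(_ x xl).
by rewrite ffunE eqxx => /eqP; rewrite oner_eq0.
Qed.

Lemma dim_coord_space P : \dim (coord_space P) = #|P|.
Proof. by have := free_delta (enum_uniq P); rewrite /free size_map -cardE => /eqP. Qed.

Lemma restrict_delta_sum P (psi : cochain k n) :
  restrict P psi = \sum_(p <- enum P) psi p *: delta p.
Proof.
apply/ffunP => q; rewrite sum_ffunE ffunE big_enum /=.
case: ifP => Pq.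
  rewrite (bigD1 q) //= big1 ?addr0 => [|p /andP[_ /negbTE pq]].
    by rewrite !ffunE eqxx [_ *: _]mulr1.
  by rewrite !ffunE eq_sym pq [_ *: _]mulr0.
rewrite big1 // => p; rewrite unfold_in => Pp; rewrite !ffunE.
by case: eqP => [e|]; [rewrite e Pp in Pq | rewrite [_ *: _]mulr0].
Qed.

Lemma coord_space_limg P : coord_space P = limg (linfun (restrict P)).
Proof.
apply/eqP; rewrite eqEsubv; apply/andP; split.
  apply/span_subvP => x /mapP [p Pp ->]; rewrite mem_enum in Pp.
  have -> : delta p = linfun (restrict P) (delta p) by rewrite lfunE /= restrict_delta.
  exact: memv_img (memvf _).
apply/subvP => phi /memv_imgP [psi _ ->]; rewrite lfunE /= restrict_delta_sum.
by rewrite big_seq; apply: memv_suml => p Pp; apply/memvZ/memv_span/map_f.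
Qed.

Lemma coord_space_vanish P phi : phi \in coord_space P -> forall q, ~~ P q -> phi q = 0.
Proof. by rewrite coord_space_limg; apply: restrict_image_vanish. Qed.

End CoordinateSpaces.

Lemma Cspace_coord (k : fieldType) m n : Cspace k m n = coord_space k (@admissible k m n).
Proof. by rewrite coord_space_limg. Qed.

Lemma path_composable a s : path (fun a b => rgt a == lft b) a s = composable_from (rgt a) s.
Proof. by elim: s a => [|b s IH] a //=; rewrite IH eq_sym. Qed.

Lemma last_end_vertex v s : last v [seq rgt a | a <- s] = end_vertex v s.
Proof. by elim: s v => [|a s IH] v //=. Qed.

Section Admissible.
Variables (k : fieldType) (m : int).
Local Open Scope ring_scope.

Definition admissible_word (v : vx) (s : seq bpT) : bool :=
  [&& composable_from v s, actR (actL (idem v) (1 : k)) (idem (end_vertex v s)) == 1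
    & (weight s)%:Z + m == (degM)%:Z].

Lemma admissibleE n (p : pathT n) : admissible k m p = admissible_word p.1 (val p.2).
Proof.
case: p => v [s sz]; rewrite /admissible /composable /endv /degp /admissible_word /=.
by case: s sz => [|a s] sz //=; rewrite path_composable last_end_vertex.
Qed.

(* <eta> = e_L <eta> e_O, so admissible words start at L *)
Lemma admissible_word_VO s : admissible_word VO s = false.
Proof.
by rewrite /admissible_word /actL /actR /etacoef /= mulr0 mul0r eq_sym oner_eq0 andbF.
Qed.

Lemma admissible_word_merge v s i t :
  merge_at s i = Some t -> admissible_word v t = admissible_word v s.
Proof.
by move=> E; have [h1 h2 h3] := merge_at_preserves v E; rewrite /admissible_word h1 h2 h3.
Qed.

(* admissible words of degree m have weight 1 - m, hence bounded length *)
Lemma admissible_word_size s : admissible_word VL s -> (size s <= 2 * `|1 - m|)%N.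
Proof.
case/and3P => comp_s _ /eqP wt; have := size_le_weight comp_s; rewrite addn0.
have -> : (1 - m) = (weight s)%:Z by move: wt; rewrite /degM /=; lia.
by rewrite absz_nat.
Qed.

(* Induction on n - pair_prefix, using
   [merge_split_word_other]. *)
Lemma bar_triangular (F : seq bpT -> k) n (Q : pred (seq bpT)) :
  (forall t, F t != 0 -> [/\ splittable t, Q t & size t = n]) ->
  (forall u, splittable u -> Q u -> size u = n -> bar F (split_word u) = 0) ->
  forall t, F t = 0.
Proof.
move=> F_supp barF0.
have prefix_lt t : splittable t -> ((pair_prefix t).*2 < size t)%N.
  move=> St; have [_ lt] := merge_size (merge_split_word St).
  by rewrite split_word_size // in lt; lia.
suff: forall d t, (n <= pair_prefix t + d)%N -> F t = 0.
  by move=> h t; apply: (h n); rewrite leq_addl.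
elim=> [|d IH] t hd.
  apply/eqP/negP => /negP /F_supp [St _ st]; have := prefix_lt t St; rewrite st; lia.
case: (leqP n (pair_prefix t + d)) => [h|h]; first exact: IH.
apply/eqP/negP => /negP Ft; have [St Qt st] := F_supp _ Ft.
have := barF0 _ St Qt st; rewrite /bar split_word_size //=.
rewrite (bigD1 (Ordinal (prefix_lt t St))) //= merge_split_word //= big1 ?addr0.
  by move/eqP; rewrite mulf_eq0 signr_eq0 (negbTE Ft).
move=> i hi; case E: (merge_at (split_word t) i) => [t'|] /=; last by rewrite mulr0.
have hi' : i != (pair_prefix t).*2 :> nat by apply: contra hi => /eqP e; apply/eqP/val_inj.
case/orP: (merge_split_word_other St hi' E) => [nS|lt'].
  case: (eqVneq (F t') 0) => [->|/F_supp [S' _ _]]; first by rewrite mulr0.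
  by rewrite S' in nS.
by rewrite IH ?mulr0 //; lia.
Qed.

End Admissible.

Definition tuple_of n (s : seq bpT) : n.-tuple bpT := insubd (nseq_tuple n Th) s.

Lemma tuple_ofE n s : size s = n -> val (tuple_of n s) = s.
Proof. by move=> sz; rewrite val_insubd sz eqxx. Qed.

Definition splittable_idx (k : fieldType) (m : int) (n : nat) : pred (pathT n) :=
  fun p => admissible k m p && splittable (val p.2).
Definition mergeable_idx (k : fieldType) (m : int) (n : nat) : pred (pathT n) :=
  fun p => admissible k m p && mergeable (val p.2).
Definition critical_idx (k : fieldType) (m : int) (n : nat) : pred (pathT n) :=
  fun p => admissible k m p && critical (val p.2).
Arguments splittable_idx : clear implicits.
Arguments mergeable_idx : clear implicits.
Arguments critical_idx : clear implicits.

Section Matching.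
Variables (k : fieldType) (m : int).
Local Open Scope ring_scope.

Lemma hdiff_inj_splittable n :
  (coord_space k (splittable_idx k m n) :&: lker (hdiff k m n) = 0)%VS.
Proof.
apply/eqP; rewrite -subv0; apply/subvP => phi /memv_capP [phi_split]; rewrite memv0.
rewrite memv_ker => /eqP dphi0.
have phi_VL0 : forall t, evs phi VL t = 0.
  apply: (@bar_triangular k _ n (admissible_word k m VL)).
    move=> t; case: (eqVneq (size t) n) => st; last by rewrite evs_bad_size ?eqxx.
    rewrite -[t]/(val (Tuple (introT eqP st))) evs_tuple => phi_t.
    case: (boolP (splittable_idx k m n (VL, Tuple (introT eqP st)))).
      by rewrite /splittable_idx admissibleE /= => /andP[-> ->].
    by move/(coord_space_vanish phi_split) => phi0; rewrite phi0 eqxx in phi_t.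
  move=> u Su adm_u su.
  have ssplit : size (split_word u) = n.+1 by rewrite split_word_size // su.
  have := dphi0; rewrite hdiffE => /ffunP /(_ (VL, tuple_of n.+1 (split_word u))).
  rewrite ffunE admissibleE /= tuple_ofE //.
  rewrite -(admissible_word_merge k m VL (merge_split_word Su)) adm_u rawd_bar tuple_ofE //.
  by rewrite ffunE.
apply/eqP/ffunP => -[v t]; rewrite ffunE; case: v; first by rewrite -evs_tuple phi_VL0.
by apply: (coord_space_vanish phi_split); rewrite /splittable_idx admissibleE /= admissible_word_VO.
Qed.

Lemma card_admissible n :
  #|@admissible k m n| =
  (#|splittable_idx k m n| + #|mergeable_idx k m n| + #|critical_idx k m n|)%N.
Proof.
rewrite -!sum1_card !(big_mkcond (fun p => p \in _)) -!big_split /=.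
apply: eq_bigr => p _; have memE (P : pred (pathT n)) : (p \in P) = P p by [].
rewrite !memE /splittable_idx /mergeable_idx /critical_idx /critical.
case: (admissible k m p) => //=; case Sp: splittable => /=.
  by rewrite (negbTE (splittable_not_mergeable Sp)).
by case: mergeable.
Qed.

Definition split_idx n (p : pathT n) : pathT n.+1 := (p.1, tuple_of n.+1 (split_word (val p.2))).

Lemma split_idx_inj n : {in splittable_idx k m n &, injective (@split_idx n)}.
Proof.
move=> [v1 t1] [v2 t2]; rewrite !unfold_in /splittable_idx /split_idx /=.
move=> /andP[_ S1] /andP[_ S2] [-> E]; congr pair; apply: val_inj => /=.
rewrite -(split_wordK S1) -(split_wordK S2).
by have := congr1 val E; rewrite !tuple_ofE ?split_word_size ?size_tuple // => ->.
Qed.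

(* the mergeable indices of length n+1 are the split splittable ones *)
Lemma card_mergeable n : #|mergeable_idx k m n.+1| = #|splittable_idx k m n|.
Proof.
rewrite -(card_in_imset (@split_idx_inj n)); apply: eq_card => w; apply/idP/imsetP.
  case: w => v t; rewrite unfold_in /mergeable_idx admissibleE /= => /andP[adm Mt].
  have [comp_t _] := andP adm.
  have [S_merge splitK] := merge_wordK comp_t Mt.
  have size_merge : size (merge_word (val t)) = n.
    by have := size_tuple t; rewrite -splitK split_word_size // => /eqP; rewrite eqSS => /eqP.
  exists (v, tuple_of n (merge_word (val t))).
    rewrite unfold_in /splittable_idx admissibleE /= tuple_ofE // S_merge andbT.
    by rewrite (admissible_word_merge k m v (merge_split_word S_merge)) splitK.
  congr pair; apply: val_inj => /=.
  by rewrite (tuple_ofE size_merge) splitK tuple_ofE // size_tuple.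
case=> -[v t] + ->; rewrite !unfold_in /splittable_idx /mergeable_idx /split_idx !admissibleE /=.
case/andP => adm St; have ssplit : size (split_word (val t)) = n.+1.
  by rewrite split_word_size // size_tuple.
rewrite tuple_ofE // -(admissible_word_merge k m v (merge_split_word St)) adm /=.
by case: (split_word_mergeable St).
Qed.

(* there is at most one critical index, the critical word from L *)
Lemma card_critical n : #|critical_idx k m n| = admissible_word k m VL (critical_word VL n) :> nat.
Proof.
pose pc : pathT n := (VL, tuple_of n (critical_word VL n)).
have [sz _ crit_c] := critical_word_spec n VL.
have only_pc : forall p, p \in critical_idx k m n -> p = pc.
  move=> [v t]; rewrite unfold_in /critical_idx admissibleE /= => /andP[adm Kt].
  case: v adm => adm; last by rewrite admissible_word_VO in adm.
  congr pair; apply: val_inj => /=; rewrite tuple_ofE //; have [comp_t _] := andP adm.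
  by rewrite (critical_word_unique comp_t Kt) size_tuple.
case: (boolP (admissible_word k m VL (critical_word VL n))) => adm_c.
  apply: (@eq_card1 _ pc) => p; apply/idP/eqP => [/only_pc //|->].
  by rewrite unfold_in /critical_idx admissibleE /= tuple_ofE // adm_c crit_c.
apply: eq_card0 => p; apply/negP => /[dup] /only_pc ->.
by rewrite unfold_in /critical_idx admissibleE /= tuple_ofE // (negbTE adm_c).
Qed.

End Matching.

(** An Euler-characteristic count for a bounded complex of finite-dimensional
   spaces. *)

Definition shift (x : nat -> nat) (i : nat) : nat := if i is j.+1 then x j else 0%N.

Lemma alt_telescope (x : nat -> nat) M :
  (\sum_(i < M.+1) (-1) ^+ i * ((x i)%:Z + (shift x i)%:Z) = (-1) ^+ M * (x M)%:Z)%R.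
Proof.
elim: M => [|M IH]; first by rewrite big_ord_recr big_ord0 /= add0r addr0.
by rewrite big_ord_recr /= IH /= exprS; ring.
Qed.

Section EulerCount.
(* d i = dim C^i, r i = rank of the differential C^i -> C^(i+1); the basis of
   C^i splits into u i + u (i-1) matched elements and b i critical ones, and
   the differential has rank at least u i *)
Variables (d u b r : nat -> nat).
Hypothesis d_split : forall i, d i = (u i + shift u i + b i)%N.
Hypothesis u_le_r : forall i, (u i <= r i)%N.
Hypothesis r_le_d : forall i, (r i + shift r i <= d i)%N.
Local Open Scope ring_scope.

Definition homology (i : nat) : nat := ((d i - r i) - shift r i)%N.

Lemma homology_le i : (homology i <= b i)%N.
Proof.
rewrite /homology; have := d_split i; have := u_le_r i; have := r_le_d i.
by case: i => [|i] /=; [lia | have := u_le_r i; lia].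
Qed.

Lemma euler_characteristic M : d M = 0%N ->
  \sum_(i < M.+1) (-1) ^+ i * (homology i)%:Z = \sum_(i < M.+1) (-1) ^+ i * (b i)%:Z.
Proof.
move=> dM0; have rM0 : r M = 0%N by have := r_le_d M; rewrite dM0; lia.
have uM0 : u M = 0%N by have := u_le_r M; lia.
have -> : \sum_(i < M.+1) (-1) ^+ i * (homology i)%:Z =
    \sum_(i < M.+1) (-1) ^+ i * (d i)%:Z
    - \sum_(i < M.+1) (-1) ^+ i * ((r i)%:Z + (shift r i)%:Z).
  rewrite -sumrB; apply: eq_bigr => i _.
  by rewrite /homology -subnDA -subzn ?r_le_d // PoszD; ring.
rewrite alt_telescope rM0 mulr0 subr0.
have -> : \sum_(i < M.+1) (-1) ^+ i * (d i)%:Z =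
    \sum_(i < M.+1) (-1) ^+ i * ((u i)%:Z + (shift u i)%:Z)
    + \sum_(i < M.+1) (-1) ^+ i * (b i)%:Z.
  by rewrite -big_split; apply: eq_bigr => i _; rewrite d_split !PoszD /= mulrDr.
by rewrite alt_telescope uM0 mulr0 add0r.
Qed.

Lemma homology_critical N n :
  (forall i, N <= i -> d i = 0)%N -> (forall i, b i <= 1)%N ->
  (forall i j, b i = 1%N -> b j = 1%N -> i = j) ->
  homology n = b n.
Proof.
move=> d_bounded b_le1 b_single.
have := homology_le n; have := b_le1 n; case bn: (b n) => [|[|]] //; first by lia.
move=> _ _; pose M := (N + n)%N.
have homology0 i : i != n -> homology i = 0%N.
  move=> ni; have := homology_le i; have := b_le1 i; case bi: (b i) => [|[|]] //; first by lia.
  by rewrite (b_single _ _ bi bn) eqxx in ni.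
have nM : (n < M.+1)%N by rewrite ltnS leq_addl.
have := euler_characteristic (d_bounded M (leq_addr n N)).
have single_term (x : nat -> nat) : (forall i, i != n -> x i = 0%N) ->
    \sum_(i < M.+1) (-1) ^+ i * (x i)%:Z = (-1) ^+ n * (x n)%:Z.
  move=> x0; rewrite (bigD1 (Ordinal nM)) //= big1 ?addr0 // => i ni.
  rewrite x0 ?mulr0 //; apply: contra ni => /eqP e; apply/eqP/val_inj.
rewrite !single_term // => [|i ni]; last first.
  have := b_le1 i; case bi: (b i) => [|[|]] //.
  by rewrite (b_single _ _ bi bn) eqxx in ni.
rewrite bn => /(congr1 (fun z => (-1) ^+ n * z)); rewrite !mulrA -expr2 sqrr_sign !mul1r.
by move/eqP; rewrite eqz_nat => /eqP.
Qed.

End EulerCount.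

(* the critical word from L is 4-periodic: eta xi theta xi_L has weight 3
   and returns to L *)
Lemma critical_word_period q r :
  end_vertex VL (critical_word VL (r + 4 * q)) = end_vertex VL (critical_word VL r) /\
  weight (critical_word VL (r + 4 * q)) = (3 * q + weight (critical_word VL r))%N.
Proof.
elim: q => [|q [end_q weight_q]]; first by rewrite muln0 addn0.
have -> : (r + 4 * q.+1 = (r + 4 * q).+4)%N by lia.
rewrite /= end_q; split => //.
by rewrite /weight !big_cons -/(weight _) weight_q /= -/(weight (critical_word VL r)); lia.
Qed.

Section CriticalAdmissible.
Variable k : fieldType.
Local Open Scope ring_scope.

Lemma admissible_critical m n : admissible_word k m VL (critical_word VL n) =
  (n %% 4 \in [:: 1; 2])%N && ((3 * (n %/ 4) + n %% 4)%N%:Z + m == 1).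
Proof.
rewrite /admissible_word; have [_ -> _] := critical_word_spec n VL.
have lt4 := ltn_pmod n (isT : (0 < 4)%N).
rewrite {1 2}(divn_eq n 4) addnC mulnC; have [-> ->] := critical_word_period (n %/ 4)%N (n %% 4)%N.
have one_neq0 : ((0 : k) == 1) = false by rewrite eq_sym oner_eq0.
move: lt4; case: (n %% 4)%N => [|[|[|[|r]]]] //= _.
all: by rewrite /actR /actL /etacoef /= ?mulr1 ?mul1r ?one_neq0 /weight ?big_cons ?big_nil
             /= ?addn0 ?addn1 ?addn2 ?eqxx /degM.
Qed.

Lemma admissible_critical_unique m i j :
  admissible_word k m VL (critical_word VL i) ->
  admissible_word k m VL (critical_word VL j) -> i = j.
Proof.
rewrite !admissible_critical !inE => /andP[ri /eqP wi] /andP[rj /eqP wj].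
have := divn_eq i 4; have := divn_eq j 4.
by move: ri rj wi wj; lia.
Qed.

End CriticalAdmissible.

Section Cohomology.
Variables (k : fieldType) (m : int).
Local Open Scope ring_scope.

(* delta o delta = 0, from D o D = 0 and the stability of admissibility
   under merges *)
Lemma hdiff2 n (phi : cochain k n) : hdiff k m n.+1 (hdiff k m n phi) = 0.
Proof.
apply/ffunP => -[v t]; rewrite hdiffE ffunE [RHS]ffunE; case: ifP => adm //.
rewrite rawd_bar hdiffE.
transitivity (bar (bar (evs phi v)) (val t)); last exact: bar_bar.
apply: bar_ext => i t' E.
case: (eqVneq (size t') n.+1) => st; last by rewrite evs_bad_size // -evs_rawd evs_bad_size.
rewrite -[t']/(val (Tuple (introT eqP st))) evs_tuple ffunE.
rewrite admissibleE /= (admissible_word_merge k m v E).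
by move: adm; rewrite admissibleE /= => ->; rewrite rawd_bar.
Qed.

Definition rank_hdiff n : nat := \dim (hdiff k m n @: Cspace k m n).

Lemma dim_Cspace n : \dim (Cspace k m n) = #|@admissible k m n|.
Proof. by rewrite Cspace_coord dim_coord_space. Qed.

Lemma rank_hdiff_ge n : (#|splittable_idx k m n| <= rank_hdiff n)%N.
Proof.
rewrite -(dim_coord_space k) -(limg_dim_eq (hdiff_inj_splittable k m n)).
apply/dimvS/limgS; rewrite Cspace_coord.
apply/span_subvP => x /mapP [p pl ->]; apply/memv_span/map_f.
by move: pl; rewrite !mem_enum unfold_in /splittable_idx => /andP[].
Qed.

(* rank-nullity for the cocycles and d^2 = 0 for the coboundaries *)
Lemma dim_Zspace n : \dim (Zspace k m n) = (#|@admissible k m n| - rank_hdiff n)%N.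
Proof. by rewrite -dim_Cspace -(limg_ker_dim (hdiff k m n) (Cspace k m n)) addnK. Qed.

Lemma rank_hdiff_le n : (rank_hdiff n <= #|@admissible k m n|)%N.
Proof. by rewrite -dim_Cspace -(limg_ker_dim (hdiff k m n) (Cspace k m n)) leq_addl. Qed.

Lemma Bspace_sub_Zspace n : (Bspace k m n.+1 <= Zspace k m n.+1)%VS.
Proof.
apply/subvP => x /memv_imgP [phi _ ->]; rewrite memv_cap; apply/andP; split.
  rewrite hdiffE /Cspace; have <- := lfunE (@projC k m n.+1) (rawd phi).
  exact: memv_img (memvf _).
by rewrite memv_ker hdiff2.
Qed.

Lemma HHdim_homology n : HHdim k m n = homology (fun i => #|@admissible k m i|) rank_hdiff n.
Proof. by rewrite /HHdim dim_Zspace; case: n => [|n] //=; rewrite dimv0. Qed.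

Lemma HHdim_critical n : HHdim k m n = admissible_word k m VL (critical_word VL n).
Proof.
rewrite HHdim_homology.
apply: (@homology_critical _ (fun i => #|splittable_idx k m i|)
         (fun i => admissible_word k m VL (critical_word VL i)) _ _ _ _ (2 * `|1 - m|).+1).
- move=> i; rewrite card_admissible card_critical; congr (_ + _)%N; congr (_ + _)%N.
  case: i => [|i] /=; last exact: card_mergeable.
  apply: eq_card0 => -[v t]; rewrite unfold_in /mergeable_idx.
  have -> : val t = [::] by apply/nilP; rewrite /nilp size_tuple.
  by rewrite andbF.
- exact: rank_hdiff_ge.
- case=> [|i] /=; first by rewrite addn0 rank_hdiff_le.
  have := dimvS (Bspace_sub_Zspace i).
  rewrite dim_Zspace -[\dim (Bspace _ _ _)]/(rank_hdiff i) => le.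
  by have := rank_hdiff_le i.+1; lia.
- move=> i lt_i; apply: eq_card0 => -[v t]; apply: negbTE.
  rewrite -[_ \in _]/(admissible k m (v, t)) admissibleE /=.
  case: v; last by rewrite admissible_word_VO.
  by apply/negP => /admissible_word_size; rewrite size_tuple; lia.
- by move=> i; rewrite leq_b1.
- move=> i j /eqP; rewrite eqb1 => adm_i /eqP; rewrite eqb1 => adm_j.
  exact: admissible_critical_unique adm_i adm_j.
Qed.

End Cohomology.

Lemma admissible_critical_family (k : fieldType) (c n : nat) : (0 < c)%N ->
  admissible_word k (c%:Z - n%:Z)%R VL (critical_word VL n) =
  (n \in [:: 4 * c - 3; 4 * c - 2]).
Proof.
move=> c_gt0; rewrite admissible_critical !inE.
have en4 := divn_eq n 4; have lt4 := ltn_pmod n (isT : (0 < 4)%N).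
apply/idP/idP => [/andP[/orP[]/eqP r /eqP w]|/orP[]/eqP en].
- by apply/orP; left; apply/eqP; lia.
- by apply/orP; right; apply/eqP; lia.
- by apply/andP; split; [apply/orP; left | ]; apply/eqP; lia.
- by apply/andP; split; [apply/orP; right | ]; apply/eqP; lia.
Qed.

Unset Implicit Arguments.
Local Open Scope ring_scope.

Theorem mainTheorem6 (k : fieldType)
    (h2 : (2 \notin [pchar k])%N) (h3 : (3 \notin [pchar k])%N) :
  (forall n : nat, HHdim k (1 - n%:Z) n = (if n \in [:: 1; 2] then 1 else 0)%N) /\
  (forall n : nat, HHdim k (2 - n%:Z) n = (if n \in [:: 5; 6] then 1 else 0)%N) /\
  (forall n : nat, HHdim k (3 - n%:Z) n = (if n \in [:: 9; 10] then 1 else 0)%N) /\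
  (forall n : nat, HHdim k (4 - n%:Z) n = (if n \in [:: 13; 14] then 1 else 0)%N).
Proof.
split; [|split; [|split]] => n; rewrite HHdim_critical.
- by rewrite (@admissible_critical_family k 1 n) //; case: ifP.
- by rewrite (@admissible_critical_family k 2 n) //; case: ifP.
- by rewrite (@admissible_critical_family k 3 n) //; case: ifP.
- by rewrite (@admissible_critical_family k 4 n) //; case: ifP.
Qed.
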